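(* Let $(A,\mathcal H)$ be a commutative Hopf algebroid and $(A,\mathcal K)$ a sub-Hopf algebroid, with inclusion $\phi:\mathcal K\to\mathcal H$ and projection $\pi:\mathcal H\to\mathcal H/\mathcal H\mathcal K^+$. For every commutative $\Bbbk$-algebra $R$, the kernel of the restriction map $\Phi_R:\mathrm{CAlg}_\Bbbk(\mathcal H,R)\to\mathrm{CAlg}_\Bbbk(\mathcal K,R)$, $f\mapsto f\circ\phi$, namely $\{f: f\circ\phi=x\circ\varepsilon|_{\mathcal K}\text{ for some }x\in\mathrm{CAlg}_\Bbbk(A,R)\}$, equals $\{h\circ\pi:h\in\mathrm{CAlg}_\Bbbk(\mathcal H/\mathcal H\mathcal K^+,R)\}$; equivalently, the map $\mathscr G_{\mathcal H}(R)/\mathscr G_{\mathcal H/\mathcal H\mathcal K^+}(R)\to\mathscr G_{\mathcal K}(R)$, $\mathscr G_{\mathcal H/\mathcal H\mathcal K^+}(R)\bullet g\mapsto g\circ\phi$, is injective.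
   Context: A commutative Hopf algebroid $(A,\mathcal H)$ over a field $\Bbbk$: commutative $\Bbbk$-algebras $A,\mathcal H$ with algebra maps $s,t:A\to\mathcal H$, $\varepsilon:\mathcal H\to A$, $\Delta:\mathcal H\to\mathcal H\otimes_A\mathcal H$ (left factor an $A$-module via $t$, right via $s$), $\mathcal S$ such that $(\mathcal H,\Delta,\varepsilon)$ is a coassociative counital $A$-coring, $\mathcal Ss=t$, $\mathcal St=s$, $\mathcal S^2=\mathrm{id}$, $\sum\mathcal S(u_1)u_2=t\varepsilon(u)$, $\sum u_1\mathcal S(u_2)=s\varepsilon(u)$ ($\Delta(u)=\sum u_1\otimes_Au_2$). A sub-Hopf algebroid $\mathcal K$: subalgebra containing $s(A),t(A)$, stable under $\mathcal S$, with $\Delta(\mathcal K)\subseteq\mathcal K\otimes_A\mathcal K$; $\mathcal K^+=\mathcal K\cap\ker\varepsilon$. $\mathscr G_{\mathcal H}(R)=\mathrm{CAlg}_\Bbbk(\mathcal H,R)$ is a groupoid with objects $\mathrm{CAlg}_\Bbbk(A,R)$, source $\varphi\mapsto\varphi s$, target $\varphi\mapsto\varphi t$, composition $(\psi\bullet\varphi)(h)=\sum\varphi(h_1)\psi(h_2)$ (similarly $\mathscr G_{\mathcal K}(R)$). $\mathscr G_{\mathcal H/\mathcal H\mathcal K^+}(R)=\mathrm{CAlg}_\Bbbk(\mathcal H/\mathcal H\mathcal K^+,R)$ embeds via $h\mapsto h\pi$, and $\mathscr G_{\mathcal H}(R)/\mathscr G_{\mathcal H/\mathcal H\mathcal K^+}(R)$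 denotes the set of orbits $\{(h\circ\pi)\bullet g\}$ of the left action by composition. *)

From HB Require Import structures.
From mathcomp Require Import all_boot all_order all_algebra.
Set Implicit Arguments. Unset Strict Implicit. Unset Printing Implicit Defensive.
Import GRing.Theory.
Local Open Scope ring_scope.

Record kalg (k : fieldType) := KAlg {
  kcar :> comPzRingType;
  kstr : {rmorphism k -> kcar} }.

Definition is_kalg_hom (k : fieldType) (X Y : kalg k) (f : X -> Y) : Prop :=
  [/\ forall x y, f (x + y) = f x + f y,
      forall x y, f (x * y) = f x * f y,
      f 1 = 1 &
      forall c : k, f (kstr X c) = kstr Y c].

(* (T, i1, i2) is the tensor product  H1 (x)_A H2  of commutative k-algebras,
   where H1 is an A-algebra via a1 and H2 via a2: i.e. the pushout of
   a1 and a2 in commutative k-algebras (i1 x = x (x) 1, i2 y = 1 (x) y). *)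
Definition is_tensor2 (k : fieldType) (A H1 H2 T : kalg k)
  (a1 : A -> H1) (a2 : A -> H2) (i1 : H1 -> T) (i2 : H2 -> T) : Prop :=
  [/\ is_kalg_hom i1, is_kalg_hom i2,
      (forall a, i1 (a1 a) = i2 (a2 a)),
      (forall (C : kalg k) (f1 : H1 -> C) (f2 : H2 -> C),
         is_kalg_hom f1 -> is_kalg_hom f2 -> (forall a, f1 (a1 a) = f2 (a2 a)) ->
         exists u : T -> C, [/\ is_kalg_hom u, forall x, u (i1 x) = f1 x
                                           & forall y, u (i2 y) = f2 y]) &
      (forall (C : kalg k) (u v : T -> C), is_kalg_hom u -> is_kalg_hom v ->
         (forall x, u (i1 x) = v (i1 x)) -> (forall y, u (i2 y) = v (i2 y)) ->
         forall z, u z = v z)].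

(* (T3, j1, j2, j3) is the triple tensor product H (x)_A H (x)_A H, where in
   each (x)_A the left factor is an A-module via t and the right one via s. *)
Definition is_tensor3 (k : fieldType) (A H T3 : kalg k) (s t : A -> H)
  (j1 j2 j3 : H -> T3) : Prop :=
  [/\ [/\ is_kalg_hom j1, is_kalg_hom j2 & is_kalg_hom j3],
      (forall a, j1 (t a) = j2 (s a)) /\ (forall a, j2 (t a) = j3 (s a)),
      (forall (C : kalg k) (f1 f2 f3 : H -> C),
         is_kalg_hom f1 -> is_kalg_hom f2 -> is_kalg_hom f3 ->
         (forall a, f1 (t a) = f2 (s a)) -> (forall a, f2 (t a) = f3 (s a)) ->
         exists u : T3 -> C, [/\ is_kalg_hom u, forall x, u (j1 x) = f1 x,
                   forall x, u (j2 x) = f2 x & forall x, u (j3 x) = f3 x]) &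
      (forall (C : kalg k) (u v : T3 -> C), is_kalg_hom u -> is_kalg_hom v ->
         (forall x, u (j1 x) = v (j1 x)) -> (forall x, u (j2 x) = v (j2 x)) ->
         (forall x, u (j3 x) = v (j3 x)) -> forall z, u z = v z)].

(* Commutative Hopf algebroid (A, H) with source s, target t, counit eps,
   comultiplication Delta : H -> T = H (x)_A H and antipode S.
   Maps out of tensor products (such as eps (x) id, Delta (x) id, S (x) id
   followed by multiplication) are described through their defining values
   on the generators i1 x = x (x) 1, i2 y = 1 (x) y; they exist and are
   unique by the universal property of the tensor product. *)
Definition is_hopf_algebroid (k : fieldType) (A H T T3 : kalg k)
  (s t : A -> H) (eps : H -> A) (Delta : H -> T) (S : H -> H)
  (i1 i2 : H -> T) (j1 j2 j3 : H -> T3) : Prop :=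
  [/\ [/\ is_kalg_hom s, is_kalg_hom t, is_kalg_hom eps,
          is_kalg_hom Delta & is_kalg_hom S],
      is_tensor2 t s i1 i2 /\ is_tensor3 s t j1 j2 j3,
      (* A-coring structure: eps and Delta are A-bimodule maps *)
      [/\ (forall a, eps (s a) = a), (forall a, eps (t a) = a),
          (forall a, Delta (s a) = i1 (s a)) & (forall a, Delta (t a) = i2 (t a))],
      (* counitality: (eps (x) id) o Delta = id = (id (x) eps) o Delta *)
      [/\ [/\ (forall e : T -> H, is_kalg_hom e ->
             (forall x, e (i1 x) = s (eps x)) -> (forall y, e (i2 y) = y) ->
             forall u, e (Delta u) = u) &
          (forall e : T -> H, is_kalg_hom e ->
             (forall x, e (i1 x) = x) -> (forall y, e (i2 y) = t (eps y)) ->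
             forall u, e (Delta u) = u)] &
      (* coassociativity: (Delta (x) id) o Delta = (id (x) Delta) o Delta *)
      (forall m12 m23 D1 D2 : T -> T3,
         is_kalg_hom m12 -> is_kalg_hom m23 -> is_kalg_hom D1 -> is_kalg_hom D2 ->
         (forall x, m12 (i1 x) = j1 x) -> (forall y, m12 (i2 y) = j2 y) ->
         (forall x, m23 (i1 x) = j2 x) -> (forall y, m23 (i2 y) = j3 y) ->
         (forall x, D1 (i1 x) = m12 (Delta x)) -> (forall y, D1 (i2 y) = j3 y) ->
         (forall x, D2 (i1 x) = j1 x) -> (forall y, D2 (i2 y) = m23 (Delta y)) ->
         forall u, D1 (Delta u) = D2 (Delta u))] &
      [/\ (forall a, S (s a) = t a), (forall a, S (t a) = s a),
          (forall u, S (S u) = u),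
          (* sum S(u1) u2 = t(eps u) *)
          (forall m : T -> H, is_kalg_hom m ->
             (forall x, m (i1 x) = S x) -> (forall y, m (i2 y) = y) ->
             forall u, m (Delta u) = t (eps u)) &
          (* sum u1 S(u2) = s(eps u) *)
          (forall m : T -> H, is_kalg_hom m ->
             (forall x, m (i1 x) = x) -> (forall y, m (i2 y) = S y) ->
             forall u, m (Delta u) = s (eps u))]].

Definition is_sub_hopf_algebroid (k : fieldType) (A H T : kalg k)
  (s t : A -> H) (Delta : H -> T) (S : H -> H) (i1 i2 : H -> T)
  (K : H -> Prop) : Prop :=
  [/\ [/\ K 0 /\ K 1, (forall x y, K x -> K y -> K (x + y)),
          (forall x, K x -> K (- x)),
          (forall x y, K x -> K y -> K (x * y)) &
          (forall (c : k) x, K x -> K (kstr H c * x))],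
      (forall a, K (s a)) /\ (forall a, K (t a)),
      (forall x, K x -> K (S x)) &
      (forall x, K x -> exists l : seq (H * H),
          (forall p, p \in l -> K p.1 /\ K p.2) /\
          Delta x = \sum_(p <- l) i1 p.1 * i2 p.2)].

Definition Kplus (k : fieldType) (A H : kalg k) (eps : H -> A) (K : H -> Prop)
  (x : H) : Prop := K x /\ eps x = 0.

Definition HKplus (k : fieldType) (A H : kalg k) (eps : H -> A) (K : H -> Prop)
  (x : H) : Prop :=
  exists l : seq (H * H), (forall p, p \in l -> Kplus eps K p.2) /\
                          x = \sum_(p <- l) p.1 * p.2.

Definition is_quotient_by (k : fieldType) (H Q : kalg k) (pi : H -> Q)
  (I : H -> Prop) : Prop :=
  [/\ is_kalg_hom pi, (forall q, exists x, pi x = q) &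
      (forall x, pi x = 0 <-> I x)].

(** Proof: if [f] agrees on [K] with [x o eps] for a character [x] of [A],
    then [f] kills [K^+] and hence the ideal [H K^+], so [f] factors through
    [pi].  Conversely, if [f = h o pi], then for [y] in [K] the element
    [y - s (eps y)] lies in [K^+] (as [eps o s = id]), hence in [H K^+], so
    [f y = f (s (eps y))], i.e. [x := f o s] works. *)
From HB Require Import structures.
From mathcomp Require Import all_boot all_order all_algebra.
Set Implicit Arguments.
Local Open Scope ring_scope.
Import GRing.Theory.

Section KalgHom.

Variables (k : fieldType) (X Y : kalg k) (f : X -> Y).
Hypothesis hf : is_kalg_hom f.

Lemma kalg_hom0 : f 0 = 0.
Proof.
case: hf => fD _ _ _; apply: (@addrI _ (f 0)).
by rewrite -fD !addr0.
Qed.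

Lemma kalg_homB a b : f (a - b) = f a - f b.
Proof.
case: hf => fD _ _ _; apply/eqP; rewrite eq_sym subr_eq -fD subrK //.
Qed.

Lemma kalg_hom_sum (I : Type) (r : seq I) (F : I -> X) :
  f (\sum_(i <- r) F i) = \sum_(i <- r) f (F i).
Proof. by case: hf => fD _ _ _; apply: (big_morph f fD kalg_hom0). Qed.

End KalgHom.

Lemma kalg_hom_comp (k : fieldType) (X Y Z : kalg k) (f : X -> Y) (g : Y -> Z) :
  is_kalg_hom f -> is_kalg_hom g -> is_kalg_hom (fun x => g (f x)).
Proof.
case=> fD fM f1 fc [gD gM g1 gc]; split=> [x y|x y||c].
- by rewrite fD gD.
- by rewrite fM gM.
- by rewrite f1 g1.
- by rewrite fc gc.
Qed.

Lemma quotient_factor (k : fieldType) (H Q R : kalg k) (pi : H -> Q)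
    (I : H -> Prop) (f : H -> R) :
  is_quotient_by pi I -> is_kalg_hom f -> (forall y, I y -> f y = 0) ->
  exists h : Q -> R, is_kalg_hom h /\ forall y, f y = h (pi y).
Proof.
move=> [hpi surj kerpi] hf fI.
have f_pi_eq a b : pi a = pi b -> f a = f b.
  move=> eq_ab; apply/eqP; rewrite -subr_eq0 -kalg_homB //; apply/eqP/fI.
  by apply/kerpi; rewrite kalg_homB // eq_ab subrr.
have surjb q : exists y, pi y == q by have [y <-] := surj q; exists y.
pose sec q := xchoose (surjb q).
have secK q : pi (sec q) = q by apply/eqP/(xchooseP (surjb q)).
exists (fun q => f (sec q)); split; last by move=> y; apply: f_pi_eq.
case: hpi => pD pM p1 pc; case: (hf) => fD fM f1 fc.
split=> [a b|a b||c].
- by rewrite -fD; apply: f_pi_eq; rewrite pD !secK.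
- by rewrite -fM; apply: f_pi_eq; rewrite pM !secK.
- by rewrite -f1; apply: f_pi_eq; rewrite secK p1.
- by rewrite -fc; apply: f_pi_eq; rewrite secK pc.
Qed.

Section HKplus.

Variables (k : fieldType) (A H : kalg k) (eps : H -> A) (K : H -> Prop).

Lemma HKplus_vanish (R : kalg k) (f : H -> R) (x : A -> R) :
  is_kalg_hom f -> is_kalg_hom x -> (forall y, K y -> f y = x (eps y)) ->
  forall y, HKplus eps K y -> f y = 0.
Proof.
move=> hf hx fK _ [l [lK ->]]; rewrite kalg_hom_sum //.
apply: big1_seq => p /andP[_ /lK [Kp ep]].
by case: hf => _ fM _ _; rewrite fM (fK _ Kp) ep kalg_hom0 // mulr0.
Qed.

Lemma HKplus_sub_counit (s : A -> H) :
  is_kalg_hom eps -> (forall a, eps (s a) = a) ->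
  (forall x y, K x -> K y -> K (x + y)) -> (forall x, K x -> K (- x)) ->
  (forall a, K (s a)) ->
  forall y, K y -> HKplus eps K (y - s (eps y)).
Proof.
move=> heps epsK KD KN Ks y Ky; exists [:: (1, y - s (eps y))]; split.
  move=> p; rewrite inE => /eqP -> /=; split; first by apply/KD/KN.
  by rewrite kalg_homB // epsK subrr.
by rewrite big_seq1 mul1r.
Qed.

End HKplus.

Theorem proposition3p30 (k : fieldType) (A H T T3 Q : kalg k)
  (s t : A -> H) (eps : H -> A) (Delta : H -> T) (S : H -> H)
  (i1 i2 : H -> T) (j1 j2 j3 : H -> T3) (K : H -> Prop) (pi : H -> Q) :
  is_hopf_algebroid s t eps Delta S i1 i2 j1 j2 j3 ->
  is_sub_hopf_algebroid s t Delta S i1 i2 K ->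
  is_quotient_by pi (HKplus eps K) ->
  forall (R : kalg k) (f : H -> R), is_kalg_hom f ->
    (exists x : A -> R, is_kalg_hom x /\ forall y, K y -> f y = x (eps y)) <->
    (exists h : Q -> R, is_kalg_hom h /\ forall y, f y = h (pi y)).
Proof.
move=> [[hs _ heps _ _] _ [epsK _ _ _] _ _] [[_ KD KN _ _] [Ks _] _ _] piQ R f hf.
split=> [[x [hx fK]] | [h [hh fh]]].
  exact: quotient_factor piQ hf (HKplus_vanish hf hx fK).
exists (fun a => f (s a)); split; first exact: kalg_hom_comp.
move=> y Ky; apply/eqP; rewrite -subr_eq0 -kalg_homB // fh.
have [_ _ kerpi] := piQ.
rewrite (proj2 (kerpi _)) ?kalg_hom0 //.
exact: HKplus_sub_counit.
Qed.
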